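(* Consider the continuous Bomber Problem described in the context, with parameter $v\in(0,1]$. Let $x=x_t>0$ be defined for small $t>0$ with $|\log t|/x_t\to\rho\in(0,\infty)$ as $t\to 0$. If there is $\gamma\in(0,1]$ such that $H(x_t,t)\ge 1-e^{-\gamma x_t+o(x_t)}$ as $t\to 0$, then $K(x_t,t)\ge \gamma x_t+o(x_t)$ as $t\to 0$.
   Context: The Bomber Problem: a bomber holding an amount $x\ge 0$ of (continuously divisible) ammunition must survive for a remaining time $t\ge 0$. Enemies arrive according to a time-homogeneous Poisson process of rate 1. Upon meeting an enemy, the bomber chooses an amount $y\in[0,x]$ of its current ammunition to fire; the enemy survives this with probability $e^{-y}$, and if it survives it destroys the bomber with probability $v\in(0,1]$. Thus the bomber survives an encounter in which it spends $y$ with probability $a(y)=1-ve^{-y}$, and continues with ammunition $x-y$. $P(x,t)$ denotes the optimal probability that the bomber survives for time $t$ starting with ammunition $x$; $H(x,t)$ denotes the optimal conditional probability of survival given that an enemy is encountered at remaining time $t$ while holding ammunition $x$; and $K(x,t)\in[0,x]$ denotes the optimal amount of ammunition to fire at that enemy, so that $H(x,t)=a(K(x,t))P(x-K(x,t),t)$. The notation $o(x_t)$ refers to a quantity $r_t$ with $r_t/x_t\to 0$ as $t\to 0$. *)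

From Stdlib Require Import Reals.
From Coquelicot Require Import Coquelicot.
Open Scope R_scope.

(* Survival probability of an encounter in which the bomber spends y. *)
Definition a (v y : R) : R := 1 - v * exp (- y).

(* Dynamic-programming characterisation of the continuous Bomber Problem:
   - P x t : optimal survival probability (a probability, in [0,1]);
   - H x t : optimal conditional survival probability given an encounter
             at remaining time t with ammunition x,
             H x t = max_{0<=y<=x} a(y) P(x-y,t);
   - K x t : an optimal amount to fire, attaining that maximum;
   - first-encounter decomposition (Poisson rate 1):
       P(x,t) = e^{-t} + int_0^t e^{-(t-s)} H(x,s) ds. *)
Definition IsBomberSolution (v : R) (P H K : R -> R -> R) : Prop :=
  (forall x t, 0 <= x -> 0 <= t -> 0 <= P x t <= 1) /\
  (forall x t, 0 <= x -> 0 <= t ->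
     0 <= K x t <= x /\
     H x t = a v (K x t) * P (x - K x t) t /\
     (forall y, 0 <= y <= x -> a v y * P (x - y) t <= H x t)) /\
  (forall x t, 0 <= x -> 0 <= t ->
     is_RInt (fun s => exp (- (t - s)) * H x s) 0 t (P x t - exp (- t))).

(* Spending [K] survives the encounter with probability at most [a v K = 1 - v e^{-K}],
   so [H >= 1 - e^{-gamma x + r}] forces [v e^{-K} <= e^{-gamma x + r}], i.e.
   [K >= gamma x + (ln v - r)].  The constant [ln v] is [o(x_t)] because
   [x_t] grows like [|log t| / rho], which tends to infinity. *)
From Stdlib Require Import Reals Lra.
From Coquelicot Require Import Coquelicot.
Open Scope R_scope.

Lemma filterlim_inv_Rabs_ln_0 :
  filterlim (fun t => / Rabs (ln t)) (at_right 0) (locally 0).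
Proof.
  apply (filterlim_comp _ _ _ (fun t => Rabs (ln t)) Rinv _ (Rbar_locally p_infty)).
  - exact (filterlim_comp _ _ _ ln Rabs _ _ _ is_lim_ln_0 (filterlim_Rabs m_infty)).
  - now apply (filterlim_Rbar_inv p_infty).
Qed.

Lemma filterlim_Rinv_0_of_ratio {T : Type} {F : (T -> Prop) -> Prop} {FF : Filter F}
    (f g : T -> R) (rho : R) :
  filterlim (fun t => / f t) F (locally 0) ->
  F (fun t => f t <> 0) ->
  filterlim (fun t => f t / g t) F (locally rho) ->
  filterlim (fun t => / g t) F (locally 0).
Proof.
  intros Hf Hnz Hratio.
  apply (filterlim_ext_loc (fun t => f t / g t * / f t)).
  { revert Hnz; apply filter_imp; intros t Hft.
    unfold Rdiv; rewrite Rmult_comm, <- Rmult_assoc, Rinv_l by exact Hft; ring. }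
  assert (Hmult : is_Rbar_mult rho 0 0)
    by (unfold is_Rbar_mult; simpl; now rewrite Rmult_0_r).
  exact (filterlim_comp_2 _ _ _ Hratio Hf (filterlim_Rbar_mult _ _ _ Hmult)).
Qed.

Lemma filterlim_const_sub_div_0 {T : Type} {F : (T -> Prop) -> Prop} {FF : Filter F}
    (x r : T -> R) (c : R) :
  filterlim (fun t => / x t) F (locally 0) ->
  filterlim (fun t => r t / x t) F (locally 0) ->
  filterlim (fun t => (c - r t) / x t) F (locally 0).
Proof.
  intros Hinv Hr.
  apply (filterlim_ext (fun t => c * / x t + - (r t / x t))).
  { intros t; unfold Rdiv; ring. }
  assert (Hplus : is_Rbar_plus (c * 0) (- 0) 0)
    by (unfold is_Rbar_plus; simpl; f_equal; f_equal; ring).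
  exact (filterlim_comp_2 _ _ _
           (filterlim_comp _ _ _ _ _ _ _ _ Hinv (filterlim_Rbar_mult_l c 0))
           (filterlim_comp _ _ _ _ _ _ _ _ Hr (filterlim_Rbar_opp 0))
           (filterlim_Rbar_plus _ _ _ Hplus)).
Qed.

Lemma a_ge_0 (v y : R) : v <= 1 -> 0 <= y -> 0 <= a v y.
Proof.
  intros Hv Hy; unfold a.
  assert (Hexp : exp (- y) * exp y = 1) by (rewrite <- exp_plus, Rplus_opp_l; apply exp_0).
  assert (1 + y <= exp y) by apply exp_ineq1_le.
  assert (0 < exp (- y)) by apply exp_pos.
  nra.
Qed.

Lemma ln_sub_le_of_a_ge (v y s : R) : 0 < v -> 1 - exp s <= a v y -> ln v - s <= y.
Proof.
  intros Hv Ha; unfold a in Ha.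
  assert (Hle : ln (v * exp (- y)) <= ln (exp s))
    by (apply ln_le; [apply Rmult_lt_0_compat; [lra | apply exp_pos] | lra]).
  rewrite ln_mult, !ln_exp in Hle by (lra || apply exp_pos).
  lra.
Qed.

Lemma bomber_H_le_a_K (v : R) (P H K : R -> R -> R) (x t : R) :
  v <= 1 -> IsBomberSolution v P H K -> 0 <= x -> 0 <= t ->
  H x t <= a v (K x t).
Proof.
  intros Hv [HP [HH _]] Hx Ht.
  destruct (HH x t Hx Ht) as [[HK0 HKx] [-> _]].
  destruct (HP (x - K x t) t ltac:(lra) Ht) as [_ HP1].
  assert (0 <= a v (K x t)) by (apply a_ge_0; lra).
  nra.
Qed.

Theorem lemma3 (v : R) (P H K : R -> R -> R) (x : R -> R) (rho gamma : R) :
  0 < v <= 1 ->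
  IsBomberSolution v P H K ->
  at_right 0 (fun t => 0 < x t) ->
  0 < rho ->
  filterlim (fun t => Rabs (ln t) / x t) (at_right 0) (locally rho) ->
  0 < gamma <= 1 ->
  (exists r : R -> R,
      filterlim (fun t => r t / x t) (at_right 0) (locally 0) /\
      at_right 0 (fun t => H (x t) t >= 1 - exp (- (gamma * x t) + r t))) ->
  exists r : R -> R,
    filterlim (fun t => r t / x t) (at_right 0) (locally 0) /\
    at_right 0 (fun t => K (x t) t >= gamma * x t + r t).
Proof.
  intros Hv Hsol Hx _ Hratio _ [r [Hr HH]].
  exists (fun t => ln v - r t); split.
  - apply filterlim_const_sub_div_0; [|exact Hr].
    apply (filterlim_Rinv_0_of_ratio _ _ rho filterlim_inv_Rabs_ln_0); [|exact Hratio].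
    apply (filter_imp (fun t => ln t < -1)); [intros t Ht; rewrite Rabs_left; lra|].
    apply (is_lim_ln_0 (fun y => y < -1)); now exists (-1).
  - assert (Ht : at_right 0 (fun t => 0 < t)) by now exists (mkposreal 1 Rlt_0_1).
    generalize (filter_and _ _ Ht (filter_and _ _ Hx HH)); apply filter_imp.
    intros t [Ht0 [Hxt Ht1]].
    assert (Ha := bomber_H_le_a_K v P H K (x t) t ltac:(lra) Hsol ltac:(lra) ltac:(lra)).
    assert (Hk := ln_sub_le_of_a_ge v (K (x t) t) (- (gamma * x t) + r t)
                    ltac:(lra) ltac:(lra)).
    lra.
Qed.
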